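(* Let $\mathcal{P}$ be a collection of cells, $K$ a field and $\prec$ a monomial order on $S_{\mathcal{P}}$. For an inner interval $[p,q]$ of $\mathcal{P}$ write $f_{p,q}=x_px_q-x_{p'}x_{q'}$ for its inner 2-minor, where $p',q'$ are its anti-diagonal corners. (i) Let $a=(a_1,a_2)$, $b=(b_1,b_2)$, $\beta=(\beta_1,\beta_2)$ with $a_1<b_1<\beta_1$, $a_2<b_2<\beta_2$, such that $[a,b]$ and $[b,\beta]$ are inner intervals of $\mathcal{P}$. Put $c=(a_1,b_2)$, $d=(b_1,a_2)$, $\gamma=(b_1,\beta_2)$, $\delta=(\beta_1,b_2)$. Assume that the $S$-polynomial $S(f_{a,b},f_{b,\beta})$ reduces to $0$ modulo the set of inner 2-minors of $\mathcal{P}$ with respect to $\prec$, and that $[c,\gamma]$ and $[d,\delta]$ are not inner intervals of $\mathcal{P}$. Then $\gcd(\mathrm{in}_\prec(f_{a,b}),\mathrm{in}_\prec(f_{b,\beta}))=1$. (ii) Let $[p,q]$ and $[p',q']$ be inner intervals of $\mathcal{P}$ meeting in the single point $b$, which is the upper left corner $(p_1,q_2)$ of $[p,q]$ and the lower right corner $(q'_1,p'_2)$ of $[p',q']$. Put $r=(p'_1,p_2)$ and $h=(q_1,q'_2)$. Assume $S(f_{p,q},f_{p',q'})$ reduces to $0$ modulo the inner 2-minors of $\mathcal{P}$ with respect to $\prec$ and that $[r,b]$ and $[b,h]$ are not inner intervals of $\mathcal{P}$. Then $\gcd(\mathrm{in}_\prec(f_{p,q}),\mathrm{in}_\prec(f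_{p',q'}))=1$.
   Context: For $a\le b$ in $\mathbb{Z}^2$ (componentwise), $[a,b]$ is the set of lattice points between them; it is proper if both coordinates of $a$ are strictly smaller than those of $b$; then $a,b$ are its diagonal corners and $(a_1,b_2),(b_1,a_2)$ its anti-diagonal corners (upper left and lower right). A cell is $[a,a+(1,1)]$. A collection of cells is a finite non-empty weakly connected set $\mathcal{P}$ of cells; $V(\mathcal{P})$ is the set of vertices of its cells. An inner interval of $\mathcal{P}$ is a proper interval all of whose cells belong to $\mathcal{P}$; its inner 2-minor is $x_ax_b-x_cx_d$ ($a,b$ diagonal, $c,d$ anti-diagonal corners). $S_{\mathcal{P}}=K[x_v:v\in V(\mathcal{P})]$. $\mathrm{in}_\prec(f)$ denotes the initial monomial. *)

From HB Require Import structures.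
From mathcomp Require Import all_boot all_order all_algebra.
From mathcomp Require Import mpoly.
Set Implicit Arguments. Unset Strict Implicit. Unset Printing Implicit Defensive.
Import Order.TTheory GRing.Theory Num.Theory.
Local Open Scope ring_scope.

Definition pt := (int * int)%type.

(* A cell [c, c+(1,1)] is represented by its lower-left corner c. *)
Definition cell_vertices (c : pt) : seq pt :=
  [:: c; (c.1 + 1, c.2); (c.1, c.2 + 1); (c.1 + 1, c.2 + 1)].

Definition cells_meet (c d : pt) : bool :=
  (`|c.1 - d.1| <= 1) && (`|c.2 - d.2| <= 1).

Definition weakly_connected (P : seq pt) : Prop :=
  forall c d, c \in P -> d \in P ->
    exists s : seq pt, all (mem P) s /\ path cells_meet c s /\ last c s = d.

Definition collection_of_cells (P : seq pt) : Prop :=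
  P != [::] /\ weakly_connected P.

Definition VP (P : seq pt) : seq pt := undup (flatten (map cell_vertices P)).

Definition nv (P : seq pt) : nat := size (VP P).

(* S_P = K[x_v : v in V(P)], variable x_v is 'X_(index of v in VP P). *)
Definition xv (K : fieldType) (P : seq pt) (v : pt) : {mpoly K[nv P]} :=
  match @insub nat (fun i => i < nv P)%N _ (index v (VP P)) with
  | Some i => 'X_i
  | None => 0
  end.

Definition inner_interval (P : seq pt) (a b : pt) : Prop :=
  a.1 < b.1 /\ a.2 < b.2 /\
  forall c : pt, a.1 <= c.1 -> c.1 < b.1 -> a.2 <= c.2 -> c.2 < b.2 -> c \in P.

Definition in_interval (a b v : pt) : Prop :=
  a.1 <= v.1 <= b.1 /\ a.2 <= v.2 <= b.2.

Definition minor (K : fieldType) (P : seq pt) (p q : pt) : {mpoly K[nv P]} :=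
  xv K P p * xv K P q - xv K P (p.1, q.2) * xv K P (q.1, p.2).

Definition is_inner_minor (K : fieldType) (P : seq pt) (f : {mpoly K[nv P]}) : Prop :=
  exists p q, inner_interval P p q /\ f = minor K P p q.

Definition monomial_order (n : nat) (le : rel 'X_{1..n}) : Prop :=
  [/\ reflexive le, antisymmetric le, transitive le & total le] /\
  (forall m, le 0%MM m) /\
  (forall m1 m2 m, le m1 m2 -> le (m1 + m)%MM (m2 + m)%MM).

(* Initial monomial: the le-largest monomial of the support (0 for f = 0) *)
Definition init (K : fieldType) (n : nat) (le : rel 'X_{1..n}) (f : {mpoly K[n]})
  : 'X_{1..n} :=
  foldr (fun m acc => if le acc m then m else acc) 0%MM (msupp f).

Definition lcoef (K : fieldType) (n : nat) (le : rel 'X_{1..n}) (f : {mpoly K[n]}) : K :=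
  f@_(init le f).

Definition mgcd (n : nat) (m1 m2 : 'X_{1..n}) : 'X_{1..n} :=
  [multinom minn (m1 i) (m2 i) | i < n].

Definition spoly (K : fieldType) (n : nat) (le : rel 'X_{1..n}) (f g : {mpoly K[n]})
  : {mpoly K[n]} :=
  let l := mlcm (init le f) (init le g) in
  (lcoef le f)^-1 *: ('X_[(l - init le f)%MM] * f)
  - (lcoef le g)^-1 *: ('X_[(l - init le g)%MM] * g).

(* f reduces to 0 modulo G (standard expression with remainder 0):
   f = sum_i h_i g_i with g_i in G and in(h_i g_i) <= in(f) whenever h_i g_i != 0 *)
Definition reduces_to_zero (K : fieldType) (n : nat) (le : rel 'X_{1..n})
  (G : {mpoly K[n]} -> Prop) (f : {mpoly K[n]}) : Prop :=
  exists (k : nat) (h g : nat -> {mpoly K[n]}),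
    [/\ forall i, (i < k)%N -> G (g i),
        f = \sum_(i < k) h i * g i
      & forall i, (i < k)%N -> h i * g i != 0 -> le (init le (h i * g i)) (init le f)].

(* Every inner 2-minor is a binomial x_p x_q - x_p' x_q' in four distinct variables, so
   its initial monomial is the product of its diagonal or of its anti-diagonal corners.
   In both configurations two such initial monomials can only have a common variable
   when both contain x_b, say x_b x_y and x_b x_z with other terms x_u x_v and x_s x_t;
   then the S-polynomial is the nonzero binomial x_y x_s x_t - x_z x_u x_v. A standard
   expression with remainder 0 makes the initial monomial of some inner minor divide
   x_y x_s x_t or x_z x_u x_v, so two of these three corners span an inner interval
   whose minor has them as initial monomial. Each of the six candidate pairs spans an
   interval containing one of the two excluded intervals, or is {u, v} or {s, t}, whose
   interval is that of f or g and has the other initial monomial. *)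

From HB Require Import structures.
From mathcomp Require Import all_boot all_order all_algebra.
From mathcomp Require Import mpoly zify.
Set Implicit Arguments. Unset Strict Implicit. Unset Printing Implicit Defensive.
Import Order.TTheory GRing.Theory Num.Theory.
Local Open Scope ring_scope.

Section Binomial.
Variables (K : fieldType) (n : nat).
Implicit Types (A B m : 'X_{1..n}).

Lemma mcoeff_binomial A B m :
  ('X_[A] - 'X_[B] : {mpoly K[n]})@_m = (A == m)%:R - (B == m)%:R.
Proof. by rewrite mcoeffB !mcoeffX. Qed.

Lemma binomial_neq0 A B : A != B -> ('X_[A] - 'X_[B] : {mpoly K[n]}) != 0.
Proof.
move=> AB; apply/eqP => /(congr1 (mcoeff A)) /eqP.
by rewrite mcoeff_binomial mcoeff0 eqxx (eq_sym B) (negbTE AB) subr0 oner_eq0.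
Qed.

Lemma msupp_binomial A B m :
  m \in msupp ('X_[A] - 'X_[B] : {mpoly K[n]}) -> m = A \/ m = B.
Proof.
rewrite mcoeff_msupp mcoeff_binomial.
case: (A =P m) => [->|_]; first by left.
by case: (B =P m) => [->|_]; [right | rewrite subrr eqxx].
Qed.

End Binomial.

Section MonomialOrder.
Variables (K : fieldType) (n : nat) (le : rel 'X_{1..n}).
Hypothesis le_mono : monomial_order le.
Implicit Types (f g h : {mpoly K[n]}) (A B m : 'X_{1..n}).

Lemma init_max f m : m \in msupp f -> le m (init le f).
Proof.
have [[le_refl _ le_trans le_total] _] := le_mono.
rewrite /init; elim: (msupp f) => //= m' s IH; set M := foldr _ _ s.
rewrite inE => /predU1P[->|/IH mM]; case: ifP => [Mm'|/negbT nMm'].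
- exact: le_refl.
- by case/orP: (le_total m' M) => //; rewrite (negbTE nMm').
- exact: le_trans mM Mm'.
- exact: mM.
Qed.

Lemma init_msupp f : f != 0 -> init le f \in msupp f.
Proof.
have [_ [le0 _]] := le_mono.
rewrite -msupp_eq0 /init; elim: (msupp f) => //= m s IH _.
case: ifP => [_|]; first by rewrite inE eqxx.
case: s IH => [|m' s] IH; first by rewrite /= le0.
by rewrite inE IH ?orbT.
Qed.

Lemma mcoeff_mulE h g M : (h * g)@_M =
  \sum_(xy <- [seq (x, y) | x <- msupp h, y <- msupp g])
    h@_xy.1 * g@_xy.2 * ((xy.1 + xy.2)%MM == M)%:R.
Proof.
rewrite {1}mpolyME raddf_sum /=; apply: eq_bigr => xy _.
by rewrite mcoeffZ mcoeffX.
Qed.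

Lemma mcoeff_mul_le h g M :
  (h * g)@_M != 0 -> le M (init le h + init le g)%MM.
Proof.
have [[_ _ le_trans _] [_ leD]] := le_mono.
rewrite mcoeff_mulE; have [|noM] := boolP (has (fun xy => xy.1 + xy.2 == M)%MM
  ([seq (x, y) | x <- msupp h, y <- msupp g])).
  case/hasP => -[m1 m2] /allpairsP[[x y] /= [hx hy [-> ->]]] /eqP <- _.
  apply: (le_trans (init le h + y)%MM); first exact/leD/init_max.
  by rewrite addmC [(_ + init le g)%MM]addmC; apply/leD/init_max.
rewrite big1_seq ?eqxx // => m /(hasPn noM) /negbTE ->.
by rewrite mulr0.
Qed.

Lemma mcoeff_mul_init h g : h != 0 -> g != 0 ->
  (h * g)@_(init le h + init le g) = h@_(init le h) * g@_(init le g).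
Proof.
have [[_ le_anti _ _] [_ leD]] := le_mono.
move=> h0 g0; rewrite mcoeff_mulE (bigD1_seq (init le h, init le g)) /=; first last.
- by apply: allpairs_uniq; rewrite ?msupp_uniq // => -[? ?] [? ?].
- by apply/allpairsP; exists (init le h, init le g); rewrite !init_msupp.
rewrite eqxx mulr1 big_seq_cond big1 ?addr0 // => -[x y].
case/andP => /allpairsP[[x' y'] /= [hx hy [-> ->]]] xy_ne.
case: eqP => [E|]; last by rewrite mulr0.
have le_xy : le (x' + y')%MM (init le h + y')%MM by apply/leD/init_max.
have le_hy : le (init le h + y')%MM (init le h + init le g)%MM.
  by rewrite addmC [(_ + init le g)%MM]addmC; apply/leD/init_max.
have Ey : (init le h + y')%MM = (init le h + init le g)%MM.
  by apply: le_anti; rewrite le_hy -E le_xy.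
move: E xy_ne; rewrite -Ey => /addIm ->.
by rewrite (addmI Ey) eqxx.
Qed.

Lemma init_mul h g : h != 0 -> g != 0 ->
  init le (h * g) = (init le h + init le g)%MM.
Proof.
have [[_ le_anti _ _] _] := le_mono.
move=> h0 g0; have top0 : (h * g)@_(init le h + init le g) != 0.
  by rewrite mcoeff_mul_init // mulf_neq0 // -mcoeff_msupp init_msupp.
have hg0 : h * g != 0 by apply: contraNneq top0 => ->; rewrite mcoeff0.
apply: le_anti; rewrite mcoeff_mul_le ?init_max ?mcoeff_msupp //.
by rewrite -mcoeff_msupp init_msupp.
Qed.

Lemma reduces_to_zero_init_dvd (G : {mpoly K[n]} -> Prop) S :
  reduces_to_zero le G S -> S != 0 -> exists2 g, G g & (init le g <= init le S)%MM.
Proof.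
have [[_ le_anti _ _] _] := le_mono.
move=> [k [h [g [Gg S_def hg_le]]]] S0.
have : S@_(init le S) != 0 by rewrite -mcoeff_msupp init_msupp.
set M := init le S; rewrite S_def raddf_sum /=.
case: (pickP (fun i : 'I_k => (h i * g i)@_M != 0)) => [i hgi _ | none]; last first.
  by rewrite big1 ?eqxx // => i _; apply/eqP/negbFE/none.
have hg0 : h i * g i != 0 by apply: contraNneq hgi => ->; rewrite mcoeff0.
have [h0 g0] : h i != 0 /\ g i != 0.
  by split; apply: contraNneq hg0 => ->; rewrite ?mul0r ?mulr0.
exists (g i); first exact: Gg.
have -> : M = init le (h i * g i).
  by apply: le_anti; rewrite init_max ?mcoeff_msupp // hg_le.
by rewrite init_mul // lem_addl.
Qed.

Lemma init_binomial A B : A != B ->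
  init le ('X_[A] - 'X_[B] : {mpoly K[n]}) = A \/
  init le ('X_[A] - 'X_[B] : {mpoly K[n]}) = B.
Proof. by move=> AB; apply/msupp_binomial/init_msupp/binomial_neq0. Qed.

Lemma scale_lcoef_binomial f A B : A != B ->
  f = 'X_[A] - 'X_[B] \/ f = 'X_[B] - 'X_[A] -> init le f = A ->
  (lcoef le f)^-1 *: f = 'X_[init le f] - 'X_[B].
Proof.
move=> AB f_def fA; rewrite /lcoef fA.
case: f_def => ->; rewrite mcoeff_binomial eqxx (eq_sym B) (negbTE AB).
- by rewrite subr0 invr1 scale1r.
- by rewrite sub0r invrN invr1 scaleN1r opprB.
Qed.

Lemma spoly_binomials f g B1 B2 :
  (lcoef le f)^-1 *: f = 'X_[init le f] - 'X_[B1] ->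
  (lcoef le g)^-1 *: g = 'X_[init le g] - 'X_[B2] ->
  spoly le f g = 'X_[mlcm (init le f) (init le g) - init le g + B2]
                - 'X_[mlcm (init le f) (init le g) - init le f + B1].
Proof.
move=> ef eg; rewrite /spoly !scalerAr ef eg !mulrBr -!mpolyXD.
rewrite !submK ?lem_mlcml ?lem_mlcmr //.
by rewrite opprB addrC addrA subrK.
Qed.

End MonomialOrder.

Section Vertices.
Variable P : seq pt.
Local Notation n := (nv P).

Definition mnmv (v : pt) : 'X_{1..n} :=
  [multinom nat_of_bool (nth (0%R, 0%R) (VP P) i == v) | i < n].

Lemma mnmvE v i : mnmv v i = (nth (0%R, 0%R) (VP P) i == v).
Proof. exact: mnmE. Qed.

Lemma xvE (K : fieldType) v : v \in VP P -> xv K P v = 'X_[mnmv v].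
Proof.
move=> vP; rewrite /xv; case: insubP => [i _ iE|]; last by rewrite /nv index_mem vP.
congr 'X_[_]; apply/mnmP => j; rewrite mnm1E mnmvE; congr nat_of_bool.
apply/eqP/eqP => [<-|jv]; first by rewrite iE nth_index.
by apply: val_inj; rewrite iE -jv index_uniq ?undup_uniq.
Qed.

Lemma mnmv_coord u : u \in VP P -> exists i, forall w, mnmv w i = (u == w).
Proof.
move=> uP; have ui : (index u (VP P) < n)%N by rewrite index_mem.
by exists (Ordinal ui) => w; rewrite mnmvE /= nth_index.
Qed.

Lemma mnmv2_neq x y z w : x \in VP P -> x \notin [:: z; w] ->
  (mnmv x + mnmv y)%MM != (mnmv z + mnmv w)%MM.
Proof.
rewrite !inE negb_or => xP /andP[xz xw]; have [i xi] := mnmv_coord xP.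
by apply/eqP => /mnmP/(_ i); rewrite !mnmDE !xi eqxx (negbTE xz) (negbTE xw).
Qed.

Lemma mnmv3_neq x y y' z w u : x \in VP P -> x \notin [:: z; w; u] ->
  (mnmv x + mnmv y + mnmv y')%MM != (mnmv z + mnmv w + mnmv u)%MM.
Proof.
rewrite !inE !negb_or => xP /and3P[xz xw xu]; have [i xi] := mnmv_coord xP.
apply/eqP => /mnmP/(_ i); rewrite !mnmDE !xi eqxx (negbTE xz) (negbTE xw) (negbTE xu).
by rewrite -addnA.
Qed.

Lemma mgcd_mnmv_eq0 x y z w : x \notin [:: z; w] -> y \notin [:: z; w] ->
  mgcd (mnmv x + mnmv y) (mnmv z + mnmv w) = 0%MM.
Proof.
rewrite !inE !negb_or => /andP[xz xw] /andP[yz yw].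
apply/mnmP => i; rewrite mnmE !mnmDE !mnmvE mnm0E; set c := nth _ _ i.
case: (c =P x) => [->|_]; first by rewrite (negbTE xz) (negbTE xw) minn0.
by case: (c =P y) => [->|_]; [rewrite (negbTE yz) (negbTE yw) minn0 | rewrite min0n].
Qed.

Lemma mlcm_mnmv_subr b y z : y != z ->
  (mlcm (mnmv b + mnmv y) (mnmv b + mnmv z) - (mnmv b + mnmv z))%MM = mnmv y.
Proof.
move=> yz; apply/mnmP => i; rewrite !mnmE; set c := nth _ _ i.
have : ~~ ((c == y) && (c == z)) by apply: contra yz => /andP[/eqP <- /eqP <-].
by case: (c == b); case: (c == y); case: (c == z).
Qed.

Lemma mnmv_le3 u x y z : u \in VP P ->
  (mnmv u <= mnmv x + mnmv y + mnmv z)%MM -> u \in [:: x; y; z].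
Proof.
move=> uP /mnm_lepP le_u; have [i ui] := mnmv_coord uP.
move: (le_u i); rewrite !mnmDE !ui eqxx !inE.
by case: (u == x); case: (u == y); case: (u == z).
Qed.

End Vertices.

Lemma cell_vertex_VP (P : seq pt) c v : c \in P -> v \in cell_vertices c -> v \in VP P.
Proof. by move=> cP vc; rewrite /VP mem_undup; apply/flatten_mapP; exists c. Qed.

Lemma inner_interval_VP (P : seq pt) p q : inner_interval P p q ->
  [/\ p \in VP P, q \in VP P, (p.1, q.2) \in VP P & (q.1, p.2) \in VP P].
Proof.
case: p q => [p1 p2] [q1 q2] [/= lt1 [lt2 cells]]; split.
- by apply: (@cell_vertex_VP _ (p1, p2)); [apply: cells => /=; lia | rewrite inE eqxx].
- apply: (@cell_vertex_VP _ (q1 - 1, q2 - 1)); first by apply: cells => /=; lia.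
  by rewrite !inE /= !subrK eqxx !orbT.
- apply: (@cell_vertex_VP _ (p1, q2 - 1)); first by apply: cells => /=; lia.
  by rewrite !inE /= !subrK eqxx !orbT.
- apply: (@cell_vertex_VP _ (q1 - 1, p2)); first by apply: cells => /=; lia.
  by rewrite !inE /= !subrK eqxx !orbT.
Qed.

Lemma inner_interval_sub (P : seq pt) (p q r s : pt) : inner_interval P p q ->
  p.1 <= r.1 -> r.1 < s.1 -> s.1 <= q.1 -> p.2 <= r.2 -> r.2 < s.2 -> s.2 <= q.2 ->
  inner_interval P r s.
Proof. by move=> [_ [_ cells]] *; split => //; split => // c *; apply: cells; lia. Qed.

Definition box_lo (u w : pt) : pt := (Num.min u.1 w.1, Num.min u.2 w.2).
Definition box_hi (u w : pt) : pt := (Num.max u.1 w.1, Num.max u.2 w.2).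

Lemma box_loC u w : box_lo u w = box_lo w u.
Proof. by rewrite /box_lo minC (minC u.2). Qed.

Lemma box_hiC u w : box_hi u w = box_hi w u.
Proof. by rewrite /box_hi maxC (maxC u.2). Qed.

Lemma box_corners p q : p.1 <= q.1 -> p.2 <= q.2 ->
  [/\ box_lo p q = p, box_hi p q = q,
      box_lo (p.1, q.2) (q.1, p.2) = p & box_hi (p.1, q.2) (q.1, p.2) = q].
Proof.
by case: p q => [p1 p2] [q1 q2] /= *; rewrite /box_lo /box_hi /=; split; congr (_, _); lia.
Qed.

Section InnerMinors.
Variables (K : fieldType) (P : seq pt) (le : rel 'X_{1..nv P}).
Hypothesis le_mono : monomial_order le.
Local Notation mnmv := (mnmv P).
Local Notation minor := (minor K P).
Implicit Types (g : {mpoly K[nv P]}) (b p q r s t u v w x y z : pt).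

Lemma minorE p q : inner_interval P p q ->
  minor p q = 'X_[mnmv p + mnmv q] - 'X_[mnmv (p.1, q.2) + mnmv (q.1, p.2)].
Proof. by case/inner_interval_VP => *; rewrite /minor !xvE // !mpolyXD. Qed.

Lemma diag_neq_anti p q : inner_interval P p q ->
  (mnmv p + mnmv q != mnmv (p.1, q.2) + mnmv (q.1, p.2))%MM.
Proof.
move=> pq; have [pP _ _ _] := inner_interval_VP pq; apply: mnmv2_neq => //.
by case: p q pq {pP} => [p1 p2] [q1 q2] [/= *]; rewrite !inE !xpair_eqE; lia.
Qed.

Lemma init_minor p q : inner_interval P p q ->
  init le (minor p q) = (mnmv p + mnmv q)%MM /\
    (lcoef le (minor p q))^-1 *: minor p q =
      'X_[init le (minor p q)] - 'X_[mnmv (p.1, q.2) + mnmv (q.1, p.2)]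
  \/
  init le (minor p q) = (mnmv (p.1, q.2) + mnmv (q.1, p.2))%MM /\
    (lcoef le (minor p q))^-1 *: minor p q =
      'X_[init le (minor p q)] - 'X_[mnmv p + mnmv q].
Proof.
move=> pq; have DA := diag_neq_anti pq.
move: (init_binomial K le_mono DA); rewrite -(minorE pq) => -[iD|iA].
- by left; split=> //; apply: scale_lcoef_binomial DA _ iD; left; apply: minorE.
- right; split=> //; apply: scale_lcoef_binomial _ _ iA; first by rewrite eq_sym.
  by right; apply: minorE.
Qed.

(* [x_u x_w] is the initial monomial of an inner 2-minor: the only interval having
   u and w as diagonal or as anti-diagonal corners is the box they span. *)
Definition inner_init_pair (u w : pt) : Prop :=
  inner_interval P (box_lo u w) (box_hi u w) /\
  init le (minor (box_lo u w) (box_hi u w)) = (mnmv u + mnmv w)%MM.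

Lemma inner_init_pairC u w : inner_init_pair u w -> inner_init_pair w u.
Proof. by rewrite /inner_init_pair box_loC box_hiC addmC. Qed.

Lemma inner_init_pair_sub u w r s : inner_init_pair u w ->
  Num.min u.1 w.1 <= r.1 -> r.1 < s.1 -> s.1 <= Num.max u.1 w.1 ->
  Num.min u.2 w.2 <= r.2 -> r.2 < s.2 -> s.2 <= Num.max u.2 w.2 ->
  inner_interval P r s.
Proof. by case=> uw _; apply: inner_interval_sub uw. Qed.

Lemma not_inner_init_pair_anti p q : inner_interval P p q ->
  init le (minor p q) = (mnmv p + mnmv q)%MM -> ~ inner_init_pair (p.1, q.2) (q.1, p.2).
Proof.
move=> pq iD [_]; have [lt1 [lt2 _]] := pq.
have [_ _ -> ->] := box_corners (ltW lt1) (ltW lt2).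
by rewrite iD; apply/eqP/diag_neq_anti.
Qed.

Lemma not_inner_init_pair_diag p q : inner_interval P p q ->
  init le (minor p q) = (mnmv (p.1, q.2) + mnmv (q.1, p.2))%MM -> ~ inner_init_pair p q.
Proof.
move=> pq iA [_]; have [lt1 [lt2 _]] := pq.
have [-> -> _ _] := box_corners (ltW lt1) (ltW lt2).
by rewrite iA => /esym/eqP; apply/negP/diag_neq_anti.
Qed.

Lemma init_inner_minor_dvd3 g x y z : is_inner_minor g ->
  (init le g <= mnmv x + mnmv y + mnmv z)%MM ->
  [\/ inner_init_pair x y, inner_init_pair x z | inner_init_pair y z].
Proof.
move=> [p [q [pq ->]]] le3.
suff [u [w [uT wT uw uwI]]] : exists u w, [/\ u \in [:: x; y; z], w \in [:: x; y; z],
    u != w & inner_init_pair u w].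
  move: uT wT uw uwI (inner_init_pairC uwI).
  rewrite !inE => /or3P[]/eqP-> /or3P[]/eqP->; rewrite ?eqxx // => _ uwI wuI;
  by [apply: Or31 | apply: Or32 | apply: Or33].
have [pP qP rP sP] := inner_interval_VP pq; have [lt1 [lt2 _]] := pq.
have [lo_pq hi_pq lo_rs hi_rs] := box_corners (ltW lt1) (ltW lt2).
have [[iD _]|[iA _]] := init_minor pq.
- exists p, q; rewrite iD in le3; split.
  + exact: mnmv_le3 pP (lepm_trans (lem_addr _ _) le3).
  + exact: mnmv_le3 qP (lepm_trans (lem_addl _ _) le3).
  + by apply: contraTneq lt1 => ->; rewrite ltxx.
  + by rewrite /inner_init_pair lo_pq hi_pq.
- exists (p.1, q.2), (q.1, p.2); rewrite iA in le3; split.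
  + exact: mnmv_le3 rP (lepm_trans (lem_addr _ _) le3).
  + exact: mnmv_le3 sP (lepm_trans (lem_addl _ _) le3).
  + by apply: contraTneq lt1 => -[->]; rewrite ltxx.
  + by rewrite /inner_init_pair lo_rs hi_rs.
Qed.

Lemma reduces_spoly_shared_variable (f1 f2 : {mpoly K[nv P]}) b y z u v s t :
  init le f1 = (mnmv b + mnmv y)%MM ->
  (lcoef le f1)^-1 *: f1 = 'X_[init le f1] - 'X_[mnmv u + mnmv v] ->
  init le f2 = (mnmv b + mnmv z)%MM ->
  (lcoef le f2)^-1 *: f2 = 'X_[init le f2] - 'X_[mnmv s + mnmv t] ->
  reduces_to_zero le (is_inner_minor (K:=K) (P:=P)) (spoly le f1 f2) ->
  y \in VP P -> y \notin [:: z; u; v] ->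
  [\/ inner_init_pair z u, inner_init_pair z v | inner_init_pair u v] \/
  [\/ inner_init_pair y s, inner_init_pair y t | inner_init_pair s t].
Proof.
move=> i1 e1 i2 e2 + yP y_new.
have yz : y != z by apply: contraNneq y_new => ->; rewrite inE eqxx.
rewrite (spoly_binomials e1 e2) i1 i2 mlcm_mnmv_subr // mlcmC mlcm_mnmv_subr 1?eq_sym //.
rewrite !addmA => red.
have S_AB : (mnmv y + mnmv s + mnmv t != mnmv z + mnmv u + mnmv v)%MM.
  exact: mnmv3_neq.
have [g Gg gS] := reduces_to_zero_init_dvd le_mono red (binomial_neq0 _ S_AB).
have [iS|iS] := init_binomial K le_mono S_AB; rewrite iS in gS.
- by right; apply: init_inner_minor_dvd3 Gg gS.
- by left; apply: init_inner_minor_dvd3 Gg gS.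
Qed.

Lemma mgcd_init_minors_diag_chain a b beta :
  inner_interval P a b -> inner_interval P b beta ->
  reduces_to_zero le (is_inner_minor (K:=K) (P:=P)) (spoly le (minor a b) (minor b beta)) ->
  ~ inner_interval P (a.1, b.2) (b.1, beta.2) ->
  ~ inner_interval P (b.1, a.2) (beta.1, b.2) ->
  mgcd (init le (minor a b)) (init le (minor b beta)) = 0%MM.
Proof.
case: a b beta => [a1 a2] [b1 b2] [e1 e2] ab be red Fc Fd.
have [[/= lt_ab1 [lt_ab2 _]] [/= lt_be1 [lt_be2 _]]] := (ab, be).
have [aP _ _ _] := inner_interval_VP ab.
have [[iab eab]|[iab _]] := init_minor ab; have [[ibe ebe]|[ibe _]] := init_minor be;
  rewrite iab ibe /=; try by apply: mgcd_mnmv_eq0; rewrite !inE !xpair_eqE; lia.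
have a_new : (a1, a2) \notin [:: (e1, e2); (a1, b2); (b1, a2)].
  by rewrite !inE !xpair_eqE; lia.
exfalso; case: (reduces_spoly_shared_variable (etrans iab (addmC _ _)) eab ibe ebe red aP a_new)
  => -[].
- by move/inner_init_pair_sub => sub; apply: Fc; apply: sub => /=; lia.
- by move/inner_init_pair_sub => sub; apply: Fd; apply: sub => /=; lia.
- exact: not_inner_init_pair_anti ab iab.
- by move/inner_init_pair_sub => sub; apply: Fc; apply: sub => /=; lia.
- by move/inner_init_pair_sub => sub; apply: Fd; apply: sub => /=; lia.
- exact: not_inner_init_pair_anti be ibe.
Qed.

Lemma mgcd_init_minors_anti_chain p q p' q' :
  inner_interval P p q -> inner_interval P p' q' -> (p.1, q.2) = (q'.1, p'.2) ->
  reduces_to_zero le (is_inner_minor (K:=K) (P:=P)) (spoly le (minor p q) (minor p' q')) ->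
  ~ inner_interval P (p'.1, p.2) (p.1, q.2) ->
  ~ inner_interval P (p.1, q.2) (q.1, q'.2) ->
  mgcd (init le (minor p q)) (init le (minor p' q')) = 0%MM.
Proof.
case: p q p' q' => [p1 p2] [q1 q2] [r1 r2] [s1 s2] pq rs [ps qr] red Fr Fh; subst s1 r2.
have [[/= lt_pq1 [lt_pq2 _]] [/= lt_rs1 [lt_rs2 _]]] := (pq, rs).
have [_ _ _ eP] := inner_interval_VP pq.
have [[ipq _]|[ipq epq]] := init_minor pq; have [[irs _]|[irs ers]] := init_minor rs;
  rewrite ipq irs /=; try by apply: mgcd_mnmv_eq0; rewrite !inE !xpair_eqE; lia.
have e_new : (q1, p2) \notin [:: (r1, s2); (p1, p2); (q1, q2)].
  by rewrite !inE !xpair_eqE; lia.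
exfalso; case: (reduces_spoly_shared_variable ipq epq (etrans irs (addmC _ _)) ers red eP e_new)
  => -[].
- by move/inner_init_pair_sub => sub; apply: Fr; apply: sub => /=; lia.
- by move/inner_init_pair_sub => sub; apply: Fh; apply: sub => /=; lia.
- exact: not_inner_init_pair_diag pq ipq.
- by move/inner_init_pair_sub => sub; apply: Fr; apply: sub => /=; lia.
- by move/inner_init_pair_sub => sub; apply: Fh; apply: sub => /=; lia.
- exact: not_inner_init_pair_diag rs irs.
Qed.

End InnerMinors.

Unset Implicit Arguments.

Theorem lemma2p1 (K : fieldType) (P : seq pt) (le : rel 'X_{1..nv P}) :
  collection_of_cells P -> monomial_order le ->
  (forall a b beta : pt,
     a.1 < b.1 < beta.1 -> a.2 < b.2 < beta.2 ->
     inner_interval P a b -> inner_interval P b beta ->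
     reduces_to_zero le (is_inner_minor (K:=K) (P:=P))
       (spoly le (minor K P a b) (minor K P b beta)) ->
     ~ inner_interval P (a.1, b.2) (b.1, beta.2) ->
     ~ inner_interval P (b.1, a.2) (beta.1, b.2) ->
     mgcd (init le (minor K P a b)) (init le (minor K P b beta)) = 0%MM)
  /\
  (forall p q p' q' b : pt,
     inner_interval P p q -> inner_interval P p' q' ->
     (forall v, in_interval p q v /\ in_interval p' q' v <-> v = b) ->
     b = (p.1, q.2) -> b = (q'.1, p'.2) ->
     reduces_to_zero le (is_inner_minor (K:=K) (P:=P))
       (spoly le (minor K P p q) (minor K P p' q')) ->
     ~ inner_interval P (p'.1, p.2) b ->
     ~ inner_interval P b (q.1, q'.2) ->
     mgcd (init le (minor K P p q)) (init le (minor K P p' q')) = 0%MM).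
Proof.
move=> _ le_mono; split.
- by move=> a b beta _ _; apply: mgcd_init_minors_diag_chain.
- by move=> p q p' q' b pq pq' _ -> b_def; apply: mgcd_init_minors_anti_chain.
Qed.
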